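(* The graphs $G_k$, $k\ge 1$, have unbounded clique-width: for every integer $r$ there exists $k$ such that the clique-width of $G_k$ exceeds $r$. Consequently, the class of strict outerconfluent graphs has unbounded clique-width.
   Context: Clique-width of a graph is the minimum number of colors needed to construct it (up to forgetting colors) by the operations: create a single vertex with any color; take the disjoint union of two colored graphs; recolor all vertices of one color to another color; add all edges between vertices of color $a$ and vertices of color $b$ for two specified colors $a\ne b$. A strict outerconfluent drawing of a graph $G$ consists of finitely many smooth curves (tracks) in a topological disk, disjoint except at shared endpoints, which are vertices of $G$ (lying on the disk boundary) or junctions (where at least three tracks meet with the same tangent). An edge curve is a smooth curve in the union of tracks from a vertex to a vertex passing otherwise only through tracks and junctions. Each pair of adjacent vertices must be joined by exactly one edge curve, no edge curve joins a vertex to itself or two non-adjacent vertices, and every track lies on some edge curve. A strict outerconfluent graph is one with such a drawing. $G_k$ is defined by the following drawing in the closed upper half-plane. Vertices $v_1,\dots,v_{3^k}$ lie left to right on the boundary line, consecutive ones joined by a track along the line; odd-position vertices are blue, even-position ones yellow, and yellow vertices have no other tracks. Remaining tracks lie in levels $0,\dots,k-1$ (horizontal slabs, bottom to top). The bottom line of level $i$ carries points $p_{i,j}$, $0\le j<3^{k-i}/2$, left to right (the blue vertices for $i=0$, junctions for $i>0$), where tracks enter with vertical tangent. In level $i$, consecutive $p_{i,j},p_{i,j+1}$ are joined by a semicircle, subdivided by two junctions into three arcs when $j$ is a multiple of three (except that the single top-level semicircle joining $p_{k-1,0},p_{k-1,1}$ is not subdivided), a single track otherwise. For $i<k-1$ and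 each subdivided semicircle joining $p_{i,j},p_{i,j+1}$, tracks connect its two subdivision junctions to $p_{i+1,j/3}$, oriented so that each one connects $p_{i+1,j/3}$ downward by a smooth curve through the semicircle to $p_{i,j}$ and $p_{i,j+1}$. Two vertices are adjacent in $G_k$ iff some edge curve connects them. (This drawing is a strict outerconfluent drawing, so each $G_k$ is strict outerconfluent.) *)

From mathcomp Require Import all_boot.
Set Implicit Arguments. Unset Strict Implicit. Unset Printing Implicit Defensive.

(* Clique-width via k-expressions with named leaves.                         *)
(* A leaf [Vtx v c] creates the vertex v with color c; [Union] is the        *)
(* [Join a b e] adds all edges between color-a and color-b vertices (a<>b).  *)
Inductive cwexp (T : Type) :=
  | Vtx of T & nat
  | Union of cwexp T & cwexp T
  | Recolor of nat & nat & cwexp T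
  | Join of nat & nat & cwexp T.

Section CW.
Variable T : eqType.

Fixpoint cw_leaves (e : cwexp T) : seq T :=
  match e with
  | Vtx v _ => [:: v]
  | Union e1 e2 => cw_leaves e1 ++ cw_leaves e2
  | Recolor _ _ e' => cw_leaves e'
  | Join _ _ e' => cw_leaves e'
  end.

Fixpoint cw_color (e : cwexp T) (u : T) : nat :=
  match e with
  | Vtx _ c => c
  | Union e1 e2 => if u \in cw_leaves e1 then cw_color e1 u else cw_color e2 u
  | Recolor a b e' => if cw_color e' u == a then b else cw_color e' u
  | Join _ _ e' => cw_color e' u
  end.

Fixpoint cw_edge (e : cwexp T) (u v : T) : bool :=
  match e with
  | Vtx _ _ => false
  | Union e1 e2 => cw_edge e1 u v || cw_edge e2 u v
  | Recolor _ _ e' => cw_edge e' u v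
  | Join a b e' =>
      cw_edge e' u v ||
      [&& u \in cw_leaves e', v \in cw_leaves e' &
          ((cw_color e' u == a) && (cw_color e' v == b)) ||
          ((cw_color e' u == b) && (cw_color e' v == a))]
  end.

(* all colors used are among 0, ..., r-1, and joins use two distinct colors;
   unions are disjoint (enforced globally by uniqueness of the leaves) *)
Fixpoint cw_wf (r : nat) (e : cwexp T) : bool :=
  match e with
  | Vtx _ c => c < r
  | Union e1 e2 => cw_wf r e1 && cw_wf r e2
  | Recolor a b e' => [&& a < r, b < r & cw_wf r e']
  | Join a b e' => [&& a < r, b < r, a != b & cw_wf r e']
  end.
End CW.

(* The graph (T, adj) has clique-width at most r: some r-expression builds
   exactly this graph (each vertex created exactly once), forgetting colors. *)
Definition cw_le (T : finType) (adj : rel T) (r : nat) : Prop :=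
  exists e : cwexp T,
    [/\ cw_wf r e, perm_eq (cw_leaves e) (enum T) &
        forall u v, cw_edge e u v = adj u v].

(* The graphs G_k.  Vertices v_1..v_{3^k} are encoded as t : 'I_(3^k) with  *)
(* v_{t+1}.  Blue vertices are t even; the blue vertex t is p_{0, t/2}.     *)
(* Gk_down i j b : the blue vertex p_{0,b} is reachable from p_{i,j} by an  *)
(* edge-curve piece descending through the levels (at p_{i,j}, i>0, the two *)
(* tracks below lead through the subdivided semicircle p_{i-1,3j}p_{i-1,3j+1}*)
(* to p_{i-1,3j} resp. p_{i-1,3j+1}).                                       *)
Fixpoint Gk_down (i j b : nat) : bool :=
  match i with
  | 0 => b == j
  | i'.+1 => Gk_down i' (3 * j) b || Gk_down i' (3 * j).+1 b
  end.

(* two distinct blue vertices x y (blue indices) are joined by an edge curve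
   whose highest part is the semicircle of level i joining p_{i,j}, p_{i,j+1} *)
Definition Gk_blue_adj (k x y : nat) : bool :=
  [exists i : 'I_k, exists j : 'I_(3 ^ k),
     [&& 2 * j.+1 < 3 ^ (k - i) &
         (Gk_down i j x && Gk_down i j.+1 y) ||
         (Gk_down i j y && Gk_down i j.+1 x)]].

Definition Gk_adj (k : nat) : rel 'I_(3 ^ k) :=
  fun s t =>
    [|| (s : nat).+1 == t, (t : nat).+1 == s |
        [&& ~~ odd s, ~~ odd t & Gk_blue_adj k s./2 t./2]].

From mathcomp Require Import all_boot zify.
Set Implicit Arguments. Unset Strict Implicit. Unset Printing Implicit Defensive.

(* Let [e] be an [r]-expression for [G_k] and [S] the vertex set of a
   subexpression holding between a third and two thirds of the blue vertices.
   Vertices of [S] of equal colour have the same neighbours outside [S], so at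
   most [2^r] vertices on one side of the cut have pairwise different
   neighbourhoods on the other side.  Along the path [v_1 ... v_{3^k}] this
   bounds the number of side changes between consecutive blue vertices by
   [4 * 2^r].  Hence at all but boundedly many scales [g] the change points
   form clusters of diameter [< 3^g] lying [> 3^(g+6)] apart, and there is a
   change of side surrounded by long constant stretches.  The base-3 structure
   of [G_k] turns it into a blue vertex [a * 3^lam], [lam = g+3] or [g+4],
   adjacent to a vertex on the other side; as all neighbours of [a * 3^lam]
   lie in a window of width about [2 * 3^lam], such crossings at different
   levels are pairwise distinguished.  So at most [4 * 2^r] even scales are
   good: a contradiction once [k] is large. *)

(** * Counting in sequences *)

Lemma size_le_4classes (T : Type) (c : T -> bool * bool) (s : seq T) m :
  (forall b, count (fun x => c x == b) s <= m) -> size s <= 4 * m.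
Proof.
have -> : size s = count (fun x => c x == (true, true)) s
  + count (fun x => c x == (true, false)) s + count (fun x => c x == (false, true)) s
  + count (fun x => c x == (false, false)) s.
  by elim: s => //= x s ->; case: (c x) => [[] []] /=; lia.
by move=> h; have := h (true, true); have := h (true, false);
  have := h (false, true); have := h (false, false); lia.
Qed.

Lemma count_iota_interval lo w M :
  count (fun z => lo <= z < lo + w) (iota 0 M) = minn M (lo + w) - minn M lo.
Proof.
elim: M => [|M IH]; first by rewrite /= !min0n.
rewrite -addn1 iotaD count_cat IH /= add0n addn0.
by case: (leqP lo M) => h1; case: (ltnP M (lo + w)) => h2 /=; lia.
Qed.

Lemma count_iota_interval_le lo w M : count (fun z => lo <= z < lo + w) (iota 0 M) <= w.
Proof. by rewrite count_iota_interval; lia. Qed.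

Lemma count_has_le (T U : Type) (ps : seq U) (Q : U -> pred T) s :
  count (fun z => has (Q ^~ z) ps) s <= sumn [seq count (Q p) s | p <- ps].
Proof.
elim: ps => [|p ps IH] /=; first by rewrite count_pred0.
apply: leq_trans (leq_add (leqnn _) IH).
by rewrite -count_predUI leq_addr.
Qed.

Lemma sumn_map_le (T : Type) (F : T -> nat) c s :
  (forall x, F x <= c) -> sumn [seq F x | x <- s] <= size s * c.
Proof. by move=> h; elim: s => //= x s IH; rewrite mulSn leq_add. Qed.

Lemma count_le_predD (T : Type) (a b : pred T) s :
  count a s <= count (predD a b) s + count b s.
Proof. by elim: s => //= x s IH; case: (a x); case: (b x) => /=; lia. Qed.

Lemma count_even_iota m : count (fun g => ~~ odd g) (iota 0 (2 * m)) = m.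
Proof.
elim: m => // m IH.
rewrite (_ : 2 * m.+1 = 2 * m + 2); last lia.
by rewrite iotaD count_cat IH /= add0n oddM /=; lia.
Qed.

Lemma count_iota_spread_le (P : pred nat) d M :
  (forall g1 g2, P g1 -> P g2 -> g1 <= g2 -> g2 <= g1 + d) -> count P (iota 0 M) <= d.+1.
Proof.
move=> spread; have [hp|] := boolP (has P (iota 0 M)); last first.
  by rewrite has_count lt0n negbK => /eqP ->.
have [g1 pg1 min1] : exists2 g1, P g1 & forall g, P g -> g1 <= g.
  by case/hasP: hp => g _ pg; case: (ex_minnP (ex_intro P g pg)) => g1; exists g1.
apply: leq_trans (count_iota_interval_le g1 d.+1 M).
by apply: sub_count => z pz /=; have := min1 z pz; have := spread g1 z pg1 pz; lia.
Qed.

Lemma uniq_map_inj_in (T1 T2 : eqType) (f : T1 -> T2) s :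
  uniq (map f s) -> {in s &, injective f}.
Proof.
elim: s => //= x s IH /andP [fx us] y z; rewrite !inE.
case/orP => [/eqP ->|ys]; case/orP => [/eqP ->|zs] // e.
- by move: fx; rewrite e map_f.
- by move: fx; rewrite -e map_f.
- exact: IH.
Qed.

Lemma exists_witness_seq (A B : eqType) (W : A -> B -> Prop) (s : seq A) :
  (forall x, x \in s -> exists y, W x y) ->
  exists ws : seq (A * B), map fst ws = s /\ forall p, p \in ws -> W p.1 p.2.
Proof.
elim: s => [|x s IH] h; first by exists [::].
have [y wy] := h x (mem_head _ _).
case: IH => [z hz|ws [ews hws]]; first by apply: h; rewrite inE hz orbT.
exists ((x, y) :: ws); split; first by rewrite /= ews.
by move=> p; rewrite inE => /orP [/eqP -> //|/hws].
Qed.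

(** * Base-3 digits and the blue adjacency of [G_k] *)

Lemma expn3_gt0 i : 0 < 3 ^ i. Proof. by rewrite expn_gt0. Qed.

Definition digit (l b : nat) : nat := b %/ 3 ^ l %% 3.

Lemma digit_mulD c m l L : l < L -> digit l (c * 3 ^ L + m) = digit l m.
Proof.
move=> lL; rewrite /digit.
have -> : c * 3 ^ L = (c * 3 ^ (L - l.+1) * 3) * 3 ^ l.
  by rewrite -!mulnA -!expnS -expnD; congr (_ * 3 ^ _); lia.
by rewrite divnMDl ?expn3_gt0 // -modnDm modnMl add0n modn_mod.
Qed.

Lemma modn_exp3S b i : b %% 3 ^ i.+1 = b %% 3 ^ i + 3 ^ i * digit i b.
Proof.
rewrite /digit expnS mulnC.
have X0 := expn3_gt0 i; set X := 3 ^ i in X0 *.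
have rX := ltn_pmod b X0; have d3 : b %/ X %% 3 < 3 by rewrite ltn_mod.
rewrite {1}(divn_eq b X) {1}(divn_eq (b %/ X) 3).
have -> : (b %/ X %/ 3 * 3 + b %/ X %% 3) * X + b %% X
        = b %/ X %/ 3 * (X * 3) + (b %/ X %% 3 * X + b %% X) by nia.
rewrite modnMDl modn_small; nia.
Qed.

Fixpoint repunit (i : nat) : nat := if i is i'.+1 then 3 * repunit i' + 1 else 0.

Lemma repunit_double i : (repunit i).*2.+1 = 3 ^ i.
Proof. by elim: i => [//|i IH]; rewrite /= expnS -IH; lia. Qed.

Lemma repunit_lt i : repunit i < 3 ^ i.
Proof. by rewrite -repunit_double; lia. Qed.

Lemma repunitD m l : repunit (m + l) = repunit m * 3 ^ l + repunit l.
Proof.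
elim: l => [|l IH]; first by rewrite !addn0 expn0 muln1.
by rewrite addnS /= IH expnS; lia.
Qed.

Lemma leq_repunit i j : i <= j -> repunit i <= repunit j.
Proof. by move=> ij; rewrite -(subnK ij) repunitD leq_addl. Qed.

Lemma digit_repunit l L : l < L -> digit l (repunit L) = 1.
Proof.
move=> lL; rewrite /digit -(subnK (ltnW lL)) repunitD.
rewrite divnMDl ?expn3_gt0 // divn_small ?repunit_lt // addn0.
have : 0 < L - l by rewrite subn_gt0.
by case: (L - l) => [//|d] _ /=; lia.
Qed.

Definition digits01 (i b : nat) : bool := all (fun l => digit l b != 2) (iota 0 i).

Lemma digits01S i b : digits01 i.+1 b = digits01 i b && (digit i b != 2).
Proof. by rewrite /digits01 -[i.+1]addn1 iotaD all_cat /= andbT. Qed.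

Lemma digits01_mulD c m L : digits01 L (c * 3 ^ L + m) = digits01 L m.
Proof.
apply: eq_in_all => l; rewrite mem_iota add0n => /andP [_ lL].
by rewrite digit_mulD.
Qed.

Lemma digits01_repunit L : digits01 L (repunit L).
Proof.
by apply/allP => l; rewrite mem_iota add0n => /andP [_ lL]; rewrite digit_repunit.
Qed.

Lemma digits01_mod i b : digits01 i b -> b %% 3 ^ i <= repunit i.
Proof.
elim: i => [|i IH]; first by rewrite expn0 modn1.
rewrite digits01S modn_exp3S => /andP [/IH h1 h2].
have d3 : digit i b < 3 by rewrite ltn_mod.
have := repunit_double i; rewrite /=; nia.
Qed.

(** Going down from [p_{i+1,j}] to [p_{i,3j}] or [p_{i,3j+1}] appends the
    base-3 digit 0 or 1 to the index. *)
Lemma Gk_downE i j b : Gk_down i j b = (b %/ 3 ^ i == j) && digits01 i b.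
Proof.
elim: i j => [|i IH] j /=; first by rewrite divn1 andbT.
rewrite !IH digits01S expnSr divnMA /digit.
by case: (digits01 i b); rewrite ?andbF ?andFb //= ?andbT; lia.
Qed.

Lemma Gk_down_range i j b : Gk_down i j b -> j * 3 ^ i <= b <= j * 3 ^ i + repunit i.
Proof.
rewrite Gk_downE => /andP [/eqP <- /digits01_mod bm].
by rewrite {2 3}(divn_eq b (3 ^ i)) leq_addr leq_add2l.
Qed.

Lemma Gk_down_mul lam a : Gk_down lam a (a * 3 ^ lam).
Proof.
rewrite Gk_downE mulnK ?expn3_gt0 // eqxx -[a * 3 ^ lam]addn0 digits01_mulD.
by apply/allP => l _; rewrite /digit div0n.
Qed.

Lemma Gk_down_level_le i j lam a :
  a %% 3 = 2 -> Gk_down i j (a * 3 ^ lam) -> i <= lam.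
Proof.
move=> a2; rewrite Gk_downE => /andP [_ /allP low].
rewrite leqNgt; apply/negP => li.
have := low lam; rewrite mem_iota li /digit mulnK ?expn3_gt0 // a2.
by move=> /(_ isT).
Qed.

(** [a * 3^lam] is the leftmost vertex below [p_{lam,a}]; the level-[lam]
    semicircles to [p_{lam,a-1}] and [p_{lam,a+1}] lead from it to the
    leftmost vertex below the former and the rightmost vertex below the
    latter. *)
Definition left_partner (lam a : nat) : nat := (a - 1) * 3 ^ lam.
Definition right_partner (lam a : nat) : nat := (a + 1) * 3 ^ lam + repunit lam.
Definition partner (right : bool) (lam a : nat) : nat :=
  if right then right_partner lam a else left_partner lam a.

Lemma partner_le right lam a : partner right lam a <= right_partner lam a.
Proof.
case: right => //=; rewrite /left_partner /right_partner.
by rewrite (leq_trans _ (leq_addr _ _)) // leq_mul2r; apply/orP; right; lia.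
Qed.

Lemma Gk_down_right_partner lam a : Gk_down lam (a + 1) (right_partner lam a).
Proof.
rewrite Gk_downE /right_partner divnMDl ?expn3_gt0 // divn_small ?repunit_lt //.
by rewrite addn0 eqxx digits01_mulD digits01_repunit.
Qed.

Lemma right_partner_level k lam a : (right_partner lam a).*2 < 3 ^ k ->
  lam < k /\ (a + 1).*2 < 3 ^ (k - lam).
Proof.
rewrite /right_partner => h.
have e := repunit_double lam; have P := expn3_gt0 lam.
have lk : lam < k.
  rewrite ltnNge; apply/negP => kl.
  have : 3 ^ k <= 3 ^ lam by rewrite leq_exp2l.
  nia.
split => //.
have E : 3 ^ k = 3 ^ (k - lam) * 3 ^ lam by rewrite -expnD subnK // ltnW.
rewrite E in h.
have : (a + 1).*2.+1 * 3 ^ lam <= 3 ^ (k - lam) * 3 ^ lam by nia.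
by rewrite leq_pmul2r.
Qed.

Lemma Gk_blue_adj_partner k right lam a : a %% 3 = 2 ->
  (right_partner lam a).*2 < 3 ^ k -> Gk_blue_adj k (a * 3 ^ lam) (partner right lam a).
Proof.
move=> a2 h; have [lk ak] := right_partner_level h.
have lt_exp : 3 ^ (k - lam) <= 3 ^ k by rewrite leq_exp2l // leq_subr.
apply/existsP; exists (Ordinal lk); apply/existsP.
case: right => /=.
- have aj : a < 3 ^ k by lia.
  exists (Ordinal aj) => /=; apply/andP; split; first lia.
  by rewrite Gk_down_mul -addn1 Gk_down_right_partner.
- have aj : a - 1 < 3 ^ k by lia.
  exists (Ordinal aj) => /=; apply/andP; split; first lia.
  by rewrite /left_partner (_ : (a - 1).+1 = a) ?Gk_down_mul ?orbT //; lia.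
Qed.

(** The digit [2] at position [lam] prevents [a * 3^lam] from being reached
    from any level above [lam], which confines its neighbours. *)
Lemma Gk_down_between i jx jy lam a y : a %% 3 = 2 ->
  Gk_down i jx (a * 3 ^ lam) -> Gk_down i jy y -> jy = jx.+1 \/ jx = jy.+1 ->
  left_partner lam a <= y <= right_partner lam a.
Proof.
move=> a2 dx dy hj.
have il := Gk_down_level_le a2 dx.
have ex : jx * 3 ^ i = a * 3 ^ lam.
  move: dx; rewrite Gk_downE => /andP [/eqP <- _]; apply: divnK.
  by rewrite dvdn_mull // dvdn_exp2l.
have /andP [y1 y2] := Gk_down_range dy.
have e1 : 3 ^ i <= 3 ^ lam by rewrite leq_exp2l.
have r1 := leq_repunit il.
have a1 : 3 ^ lam <= a * 3 ^ lam by rewrite leq_pmull; lia.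
rewrite /left_partner /right_partner mulnBl mulnDl !mul1n.
by case: hj => ej; rewrite ej mulSn in ex y1 y2; lia.
Qed.

Lemma Gk_blue_adj_between k lam a y : a %% 3 = 2 ->
  Gk_blue_adj k (a * 3 ^ lam) y -> left_partner lam a <= y <= right_partner lam a.
Proof.
move=> a2 /existsP [i /existsP [j /andP [_ /orP [] /andP [dx dy]]]].
- exact: Gk_down_between a2 dx dy (or_introl erefl).
- exact: Gk_down_between a2 dy dx (or_intror erefl).
Qed.

Lemma partner_neq right lam lam' a a' : a %% 3 = 2 -> a' %% 3 = 2 -> lam < lam' ->
  partner right lam a != partner right lam' a'.
Proof.
move=> a2 a2' ll; apply/eqP => E.
have : digit lam (partner right lam a) = digit lam (partner right lam' a') by rewrite E.
case: right {E} => /=; rewrite /right_partner /left_partner.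
- rewrite (digit_mulD _ _ ll) digit_repunit // /digit.
  rewrite divnMDl ?expn3_gt0 // divn_small ?repunit_lt //; lia.
- rewrite -[(a' - 1) * _]addn0 (digit_mulD _ _ ll) /digit div0n mulnK ?expn3_gt0 //.
  lia.
Qed.

(** [Gk_adj k s t] unfolds to [Gk_adjn k s t]. *)
Definition Gk_adjn (k s t : nat) : bool :=
  [|| s.+1 == t, t.+1 == s | [&& ~~ odd s, ~~ odd t & Gk_blue_adj k s./2 t./2]].

Lemma Gk_blue_adjC k x y : Gk_blue_adj k x y = Gk_blue_adj k y x.
Proof.
by apply/existsP/existsP => -[i /existsP [j H]]; exists i; apply/existsP; exists j;
  rewrite orbC.
Qed.

Lemma Gk_adjnC k s t : Gk_adjn k s t = Gk_adjn k t s.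
Proof. by rewrite /Gk_adjn Gk_blue_adjC orbA [(s.+1 == t) || _]orbC -orbA andbCA. Qed.

Lemma Gk_adjn_double k b c : Gk_adjn k (2 * b) (2 * c) = Gk_blue_adj k b c.
Proof.
rewrite /Gk_adjn !mul2n !odd_double /= !doubleK.
by have [-> ->] : ((b.*2).+1 == c.*2) = false /\ ((c.*2).+1 == b.*2) = false by split; lia.
Qed.

Lemma Gk_adjn_odd k s t : odd s -> Gk_adjn k s t = (s.+1 == t) || (t.+1 == s).
Proof. by move=> os; rewrite /Gk_adjn os /= orbF. Qed.

Definition brackets (w lam a pL u v : nat) : Prop :=
  [/\ a %% 3 = 2, pL = a * 3 ^ lam \/ pL = left_partner lam a,
      pL <= u <= pL + w & v <= right_partner lam a <= v + w].

Lemma brackets_weaken w w' lam a pL u v :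
  w <= w' -> brackets w lam a pL u v -> brackets w' lam a pL u v.
Proof. by move=> ww [h1 h2 h3 h4]; split => //; lia. Qed.

Lemma brackets_nonzero_digit lam u v : digit lam u != 0 -> u <= v <= u + repunit lam ->
  exists a pL, brackets (3 * 3 ^ lam) lam a pL u v.
Proof.
rewrite /digit => d0 /andP [uv vu].
have Y0 := expn3_gt0 lam; have := repunit_double lam.
have := divn_eq u (3 ^ lam); have := ltn_pmod u Y0.
set Y := 3 ^ lam in Y0 *; set m := u %/ Y in d0 *; set rho := u %% Y.
move=> rhoY ue rY.
have d3 : m %% 3 < 3 by rewrite ltn_mod.
have [m2|m1] : m %% 3 = 2 \/ m %% 3 = 1 by lia.
- exists m, (m * Y); split; [done|by left| |];
    rewrite /right_partner ?mulnDl; lia.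
- exists m.+1, (m * Y); split; [lia|by right; rewrite /left_partner subn1| |];
    rewrite /right_partner ?mulnDl; lia.
Qed.

Lemma brackets_zero_digit lam u v : digit lam u = 0 -> 3 ^ lam.+1 <= u ->
  u %% 3 ^ lam + (v - u) <= repunit lam -> u <= v ->
  exists a pL, brackets (3 * 3 ^ lam) lam a pL u v.
Proof.
rewrite /digit expnS => d0 uY hr uv.
have Y0 := expn3_gt0 lam; have := repunit_double lam.
have := divn_eq u (3 ^ lam); have := ltn_pmod u Y0.
set Y := 3 ^ lam in Y0 uY *; set m := u %/ Y in d0 *; set rho := u %% Y in hr *.
move=> rhoY ue rY.
have m3 : 3 <= m by apply: contraLR uY; rewrite -!ltnNge ue; nia.
exists m.-1, (m.-2 * Y); split.
- lia.
- by right; rewrite /left_partner subn1.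
- rewrite ue (_ : m = m.-2 + 2) ?mulnDl; lia.
- rewrite /right_partner (_ : m.-1 + 1 = m) ?ue; lia.
Qed.

Lemma brackets_near h u v : u <= v -> v - u <= repunit h -> 9 * 3 ^ h <= u ->
  exists lam a pL, (lam = h \/ lam = h.+1) /\ brackets (9 * 3 ^ h) lam a pL u v.
Proof.
move=> uv vu u9.
have w1 : 3 * 3 ^ h <= 9 * 3 ^ h by lia.
have w2 : 3 * 3 ^ h.+1 <= 9 * 3 ^ h by rewrite expnS; lia.
have rS : repunit h.+1 = 3 * repunit h + 1 by [].
have [dh|dh] := eqVneq (digit h u) 0; last first.
  have [|a [pL br]] := brackets_nonzero_digit (v := v) dh; first lia.
  by exists h, a, pL; split; [left|exact: brackets_weaken br].
have [hr|hr] := leqP (u %% 3 ^ h + (v - u)) (repunit h).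
  have [|a [pL br]] := brackets_zero_digit dh _ hr uv; first by rewrite expnS; lia.
  by exists h, a, pL; split; [left|exact: brackets_weaken br].
have [dh1|dh1] := eqVneq (digit h.+1 u) 0; last first.
  have [|a [pL br]] := brackets_nonzero_digit (v := v) dh1; first lia.
  by exists h.+1, a, pL; split; [right|exact: brackets_weaken br].
have [||a [pL br]] := brackets_zero_digit dh1 _ _ uv.
- by rewrite !expnS; lia.
- by rewrite modn_exp3S dh muln0 addn0; have := ltn_pmod u (expn3_gt0 h);
    have := repunit_double h; lia.
- by exists h.+1, a, pL; split; [right|exact: brackets_weaken br].
Qed.

(** * Subexpressions of clique-width expressions *)

Section Subexpressions.
Variable T : eqType.
Implicit Types e : cwexp T.

Fixpoint subexp (e' e : cwexp T) : Prop :=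
  e' = e \/ match e with
            | Vtx _ _ => False
            | Union e1 e2 => subexp e' e1 \/ subexp e' e2
            | Recolor _ _ e0 | Join _ _ e0 => subexp e' e0
            end.

Lemma subexp_refl e : subexp e e.
Proof. by case: e => *; left. Qed.

Lemma subexp_leaves e' e : subexp e' e -> {subset cw_leaves e' <= cw_leaves e}.
Proof.
elim: e => [w c|e1 IH1 e2 IH2|a b e IH|a b e IH] [-> //|] //=.
by case=> [/IH1 h|/IH2 h] x /h; rewrite mem_cat => ->; rewrite ?orbT.
Qed.

Lemma cw_wf_subexp r e' e : subexp e' e -> cw_wf r e -> cw_wf r e'.
Proof.
elim: e => [x c|e1 IH1 e2 IH2|a b e IH|a b e IH] [-> //|] //=.
- by case=> [/IH1 h|/IH2 h] /andP [w1 w2]; apply: h.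
- by move=> /IH h /and3P [_ _ w]; apply: h.
- by move=> /IH h /and4P [_ _ _ w]; apply: h.
Qed.

Lemma cw_color_lt r e u : cw_wf r e -> cw_color e u < r.
Proof.
elim: e => [x c|e1 IH1 e2 IH2|a b e IH|a b e IH] //=.
- by case/andP => w1 w2; case: ifP => _; [apply: IH1|apply: IH2].
- by case/and3P => _ hb w; case: ifP => _; [|apply: IH].
- by case/and4P => _ _ _ w; apply: IH.
Qed.

Lemma cw_edge_leaves e u v :
  cw_edge e u v -> (u \in cw_leaves e) && (v \in cw_leaves e).
Proof.
elim: e => [w c|e1 IH1 e2 IH2|a b e IH|a b e IH] //=.
- by rewrite !mem_cat; case/orP => [/IH1|/IH2] /andP [-> ->]; rewrite ?orbT.
- by case/orP => [/IH //|/and3P [-> -> _]].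
Qed.

Lemma cw_edge_notin_l e u w : u \notin cw_leaves e -> cw_edge e u w = false.
Proof. by apply: contraNF => /cw_edge_leaves /andP []. Qed.

Lemma cw_edge_notin_r e u w : w \notin cw_leaves e -> cw_edge e u w = false.
Proof. by apply: contraNF => /cw_edge_leaves /andP []. Qed.

(** Same-coloured vertices are treated alike by every later operation. *)
Lemma cw_twins e' e u v : subexp e' e -> uniq (cw_leaves e) ->
  u \in cw_leaves e' -> v \in cw_leaves e' -> cw_color e' u = cw_color e' v ->
  cw_color e u = cw_color e v /\
  forall w, w \notin cw_leaves e' -> cw_edge e u w = cw_edge e v w.
Proof.
move=> + + hu hv cuv.
elim: e => [x c|e1 IH1 e2 IH2|a b e IH|a b e IH] [<-|] //;
  try by split => // w hw; rewrite !cw_edge_notin_r.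
- rewrite [cw_leaves _]/= cat_uniq => + /and3P [u1 /hasPn dis u2].
  case=> [s1|s2].
  + have [c1 tw] := IH1 s1 u1.
    have [hu1 hv1] := (subexp_leaves s1 hu, subexp_leaves s1 hv).
    have nu2 : u \notin cw_leaves e2 by apply: contraL hu1 => /dis.
    have nv2 : v \notin cw_leaves e2 by apply: contraL hv1 => /dis.
    rewrite /= hu1 hv1; split => // w hw.
    by rewrite tw // (cw_edge_notin_l _ nu2) (cw_edge_notin_l _ nv2).
  + have [c2 tw] := IH2 s2 u2.
    have [hu2 hv2] := (subexp_leaves s2 hu, subexp_leaves s2 hv).
    have [nu1 nv1] := (dis _ hu2, dis _ hv2).
    rewrite /= (negbTE nu1) (negbTE nv1); split => // w hw.
    by rewrite tw // (cw_edge_notin_l _ nu1) (cw_edge_notin_l _ nv1).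
- by move=> s ue; have [/= -> tw] := IH s ue.
- move=> s ue; have [c1 tw] := IH s ue.
  split => // w hw; rewrite /= tw // c1.
  by rewrite (subexp_leaves s hu) (subexp_leaves s hv).
Qed.

Section Weight.
Variables (h : T -> nat) (s : seq nat).
Hypotheses (h_inj : injective h) (s_uniq : uniq s).

Definition weight e : nat := count (fun x => x \in map h (cw_leaves e)) s.

Lemma weight_union e1 e2 : uniq (cw_leaves (Union e1 e2)) ->
  weight (Union e1 e2) = weight e1 + weight e2.
Proof.
rewrite /= cat_uniq => /and3P [_ /hasPn dis _].
rewrite /weight -count_predUI.
have -> : count (predI (fun x => x \in map h (cw_leaves e1))
                       (fun x => x \in map h (cw_leaves e2))) s = 0.
  apply/eqP; rewrite -leqn0 leqNgt -has_count; apply/hasPn => x _ /=.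
  apply/negP => /andP [/mapP [y1 hy1 ->] /mapP [y2 hy2 /h_inj e12]].
  by move: (dis _ hy2); rewrite -e12 hy1.
by rewrite addn0; apply: eq_count => x; rewrite /= map_cat mem_cat.
Qed.

Lemma weight_Vtx v c : weight (Vtx v c) <= 1.
Proof.
rewrite /weight (eq_count (a2 := pred1 (h v))); last by move=> x; rewrite inE.
by rewrite count_uniq_mem ?leq_b1.
Qed.

Lemma balanced_subexp e m : uniq (cw_leaves e) -> 0 < m -> m <= weight e ->
  exists2 e', subexp e' e & m <= weight e' < 2 * m.
Proof.
elim: e => [v c|e1 IH1 e2 IH2|a b e IH|a b e IH] ue m0 hm.
- by exists (Vtx v c); [exact: subexp_refl|have := weight_Vtx v c; lia].
- have [small|big] := ltnP (weight (Union e1 e2)) (2 * m).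
    by exists (Union e1 e2); [exact: subexp_refl|lia].
  move: (ue); rewrite /= cat_uniq => /and3P [u1 _ u2].
  rewrite weight_union // in big.
  have [h1|h1] := leqP m (weight e1).
    by have [e' s' H] := IH1 u1 m0 h1; exists e' => //; right; left.
  have h2 : m <= weight e2 by lia.
  by have [e' s' H] := IH2 u2 m0 h2; exists e' => //; right; right.
- by have [e' s' H] := IH ue m0 hm; exists e' => //; right.
- by have [e' s' H] := IH ue m0 hm; exists e' => //; right.
Qed.

End Weight.
End Subexpressions.

(** * Cuts, twin classes and scales *)

Section TwinClasses.
Variables (n r : nat) (adj : rel nat) (S : pred nat) (col : nat -> nat).
Hypothesis adjC : forall u v, adj u v = adj v u.
Hypothesis col_lt : forall u, u < n -> S u -> col u < r.
Hypothesis twins : forall u v w, u < n -> v < n -> w < n -> S u -> S v ->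
  col u = col v -> ~~ S w -> adj u w = adj v w.

Definition separated (side : bool) (x y : nat) : Prop :=
  exists w, [/\ w < n, S w = ~~ side & adj x w != adj y w].

Lemma separatedC side x y : separated side x y -> separated side y x.
Proof. by case=> w [h1 h2 h3]; exists w; split => //; rewrite eq_sym. Qed.

(** A vertex of [S] is determined up to twins by its colour, a vertex
    outside [S] by the colours of its neighbours in [S]. *)
Definition signature (side : bool) (x : nat) : r.-tuple bool :=
  if side then [tuple col x == i | i < r]
  else [tuple has (fun u => S u && (col u == i) && adj x u) (iota 0 n) | i < r].

Lemma signature_inj side x y : x < n -> y < n -> S x = side -> S y = side ->
  signature side x = signature side y -> ~ separated side x y.
Proof.
move=> xn yn sx sy E [w [wn sw]]; apply/negP; rewrite negbK.
have sigE i : tnth (signature side x) i = tnth (signature side y) i by rewrite E.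
have cw := col_lt wn; case: side sx sy sw sigE {E} => sx sy sw sigE.
- have cx := col_lt xn sx.
  have := sigE (Ordinal cx); rewrite !tnth_mktuple eqxx => /esym /eqP cy.
  by rewrite (twins xn yn wn sx sy (esym cy)) ?sw.
- have sw1 : S w by rewrite sw.
  have adj_transfer a b : a < n -> b < n -> S a = false -> S b = false ->
      tnth (signature false a) =1 tnth (signature false b) -> adj a w -> adj b w.
    move=> an bn sa sb sig aw.
    have := sig (Ordinal (cw sw1)); rewrite !tnth_mktuple /=.
    have -> : has (fun u => S u && (col u == col w) && adj a u) (iota 0 n).
      by apply/hasP; exists w; rewrite ?mem_iota ?add0n ?wn // sw1 eqxx aw.
    move/esym/hasP => [u]; rewrite mem_iota add0n => /andP [_ un].
    move=> /andP [/andP [su /eqP cu] bu].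
    by rewrite adjC -(twins un wn bn su sw1 cu) ?sb // adjC.
  apply/eqP; apply/idP/idP; first exact: adj_transfer xn yn sx sy sigE.
  by apply: adj_transfer yn xn sy sx _ => i; rewrite sigE.
Qed.

Lemma separated_size side xs : uniq xs ->
  all (fun x => (x < n) && (S x == side)) xs ->
  (forall x y, x \in xs -> y \in xs -> x != y -> separated side x y) ->
  size xs <= 2 ^ r.
Proof.
move=> ux /allP ax sep.
have inj : {in xs &, injective (signature side)}.
  move=> x y hx hy E; apply/eqP/negPn/negP => nxy.
  have /andP [xn /eqP sx] := ax x hx; have /andP [yn /eqP sy] := ax y hy.
  exact: signature_inj xn yn sx sy E (sep x y hx hy nxy).
rewrite -(size_map (signature side)) -(card_uniqP _); last by rewrite map_inj_in_uniq.
by rewrite (leq_trans (max_card _)) // card_tuple card_bool.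
Qed.

End TwinClasses.

Section Boundaries.
Variables (S : pred nat) (N : nat).

Definition blue_side (b : nat) : bool := S (2 * b).

Definition boundaries : seq nat := [seq b <- iota 1 N.-1 | blue_side b.-1 != blue_side b].

Lemma mem_boundaries b :
  (b \in boundaries) = [&& 0 < b, b < N & blue_side b.-1 != blue_side b].
Proof. by rewrite mem_filter mem_iota; case: b => [|b] /=; lia. Qed.

Variables (k r : nat) (col : nat -> nat).
Hypothesis col_lt : forall u, u < 3 ^ k -> S u -> col u < r.
Hypothesis twins : forall u v w, u < 3 ^ k -> v < 3 ^ k -> w < 3 ^ k -> S u -> S v ->
  col u = col v -> ~~ S w -> Gk_adjn k u w = Gk_adjn k v w.
Hypothesis HN : (3 ^ k).+1 = N.*2.

(** At a boundary [b] the yellow vertex [2b-1] has one path neighbour on the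
    other side; for boundaries of equal parity that neighbour is not
    adjacent to the other yellow vertex. *)
Lemma boundaries_class_size side par :
  count (fun b => (S (2 * b).-1, odd b) == (side, par)) boundaries <= 2 ^ r.
Proof.
rewrite -size_filter; set L := filter _ boundaries.
have memL b : b \in L ->
    [/\ 0 < b, b < N, S (2 * b).-2 != S (2 * b), S (2 * b).-1 = side & odd b = par].
  rewrite mem_filter mem_boundaries xpair_eqE /blue_side.
  move=> /andP [/andP [/eqP h1 /eqP h2] /and3P [b0 bN]].
  by rewrite (_ : 2 * b.-1 = (2 * b).-2) //; lia.
rewrite -(size_map (fun b => (2 * b).-1)).
apply: (separated_size (Gk_adjnC k) col_lt twins (side := side)).
- rewrite map_inj_in_uniq ?filter_uniq ?iota_uniq //.
  by move=> x y /memL [x0 _ _ _ _] /memL [y0 _ _ _ _]; lia.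
- by apply/allP => y /mapP [b /memL [b0 bN _ sb _] ->]; rewrite sb eqxx andbT; lia.
move=> y1 y2 /mapP [b /memL [b0 bN sb yb pb] ->] /mapP [c /memL [c0 cN _ _ pc] ->] ne.
have bc : b != c by apply: contraNneq ne => ->.
exists (if S (2 * b).-2 == side then 2 * b else (2 * b).-2); split.
- by case: ifP => _; lia.
- by clear L memL yb; case: ifP; move: sb; case: side (S _) (S _) => [] [] [].
- have odd_pred x : 0 < x -> odd (2 * x).-1 by case: x => // x _; rewrite mulnS /= oddM.
  rewrite !Gk_adjn_odd ?odd_pred //.
  have oc : odd b = odd c by rewrite pb pc.
  by case: ifP => _; apply/eqP => /esym/eqP; move: bc oc b0 c0; clear; lia.
Qed.

Lemma size_boundaries : size boundaries <= 4 * 2 ^ r.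
Proof.
apply: (size_le_4classes (c := fun b => (S (2 * b).-1, odd b))) => -[side par].
exact: boundaries_class_size.
Qed.

End Boundaries.

Definition distn (a b : nat) : nat := (a - b) + (b - a).

Section Scales.
Variables (S : pred nat) (N : nat).

Local Notation f := (blue_side S).
Local Notation margin g := (3 ^ (g + 6) - 3 ^ g - 2).

Definition cut_points : seq nat := [:: 0, N & boundaries S N].

Definition good_scale (g : nat) : bool :=
  all (fun pq => (distn pq.1 pq.2 < 3 ^ g) || (3 ^ (g + 6) < distn pq.1 pq.2))
    (allpairs pair cut_points cut_points).

Definition near (s z : nat) : bool := has (fun p => distn p z < s) cut_points.

Lemma good_scaleP g p q : good_scale g -> p \in cut_points -> q \in cut_points ->
  distn p q < 3 ^ g \/ 3 ^ (g + 6) < distn p q.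
Proof. by move=> /allP gd hp hq; apply/orP/(gd (p, q))/allpairs_f. Qed.

Lemma boundary_cut_point b : b \in boundaries S N -> b \in cut_points.
Proof. by move=> h; rewrite !inE h !orbT. Qed.

Lemma blue_side_const a d : a + d < N ->
  (forall b, a < b <= a + d -> b \notin boundaries S N) -> f (a + d) = f a.
Proof.
elim: d => [|d IH] hN hb; first by rewrite addn0.
rewrite -(IH _ (fun b hb' => hb b _)); try lia.
have := hb (a + d.+1); rewrite mem_boundaries (_ : (a + d.+1).-1 = a + d); last lia.
by case: eqP => // _; rewrite hN andbT; lia.
Qed.

Lemma count_near_le s : count (near s) (iota 0 N) <= size cut_points * (2 * s).
Proof.
apply: leq_trans (count_has_le cut_points (fun p z => distn p z < s) _) _.
apply: sumn_map_le => p.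
apply: leq_trans (count_iota_interval_le (p - s) (2 * s) N).
by apply: sub_count => z /=; rewrite /distn; lia.
Qed.

Lemma exists_far s (a : pred nat) : size cut_points * (2 * s) < N %/ 3 ->
  N %/ 3 <= count a (iota 0 N) -> exists z, [/\ z < N, ~~ near s z & a z].
Proof.
move=> h1 h2.
have := count_le_predD a (near s) (iota 0 N); have := count_near_le s.
move=> h3 h4; have : 0 < count (predD a (near s)) (iota 0 N) by lia.
rewrite -has_count => /hasP [z]; rewrite mem_iota => /andP [_ zN] /andP [fz az].
by exists z.
Qed.

Lemma near_cluster g x d c0 : good_scale g -> c0 \in cut_points ->
  distn c0 x.+1 < 3 ^ g -> (forall z, x < z < x + d -> near (3 ^ g) z) ->
  forall z, x < z < x + d ->
  exists2 p, p \in cut_points & (distn p z < 3 ^ g) && (distn p c0 < 3 ^ g).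
Proof.
move=> gd hc0 nc0 hnear z /andP [].
have HE : 3 ^ (g + 6) = 729 * 3 ^ g by rewrite expnD mulnC.
have s0 := expn3_gt0 g.
elim: z => [//|z IH] xz zxd.
have [<-|xz'] : x = z \/ x < z by lia.
  by exists c0; rewrite // nc0 /distn subnn.
have [p hp /andP [np dp]] := IH xz' (ltnW zxd).
have /hasP [q hq nq] := hnear z.+1 ltac:(lia).
exists q => //; rewrite nq.
have dqp : distn q p < 3 ^ g.
  by case: (good_scaleP gd hq hp) => //; move: np nq; rewrite /distn; lia.
by case: (good_scaleP gd hq hc0) => //; move: dqp dp; rewrite /distn; lia.
Qed.

Lemma left_gap g x c p : good_scale g -> ~~ near (3 ^ g) x -> c \in cut_points ->
  distn c x.+1 < 3 ^ g -> p \in cut_points -> p <= x -> p + margin g < x.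
Proof.
move=> gd /hasPn fx hc nc hp px.
have HE : 3 ^ (g + 6) = 729 * 3 ^ g by rewrite expnD mulnC.
have := fx p hp; have := fx c hc.
by case: (good_scaleP gd hp hc); move: nc; rewrite /distn; lia.
Qed.

Lemma right_gap g y c p : good_scale g -> ~~ near (3 ^ g) y -> c \in cut_points ->
  distn c y.-1 < 3 ^ g -> 0 < y -> p \in cut_points -> y <= p -> y + margin g < p.
Proof.
move=> gd /hasPn fy hc nc y0 hp py.
have HE : 3 ^ (g + 6) = 729 * 3 ^ g by rewrite expnD mulnC.
have := fy p hp; have := fy c hc.
by case: (good_scaleP gd hp hc); move: nc; rewrite /distn; lia.
Qed.

Lemma count_bad_scales G :
  count (predC good_scale) (iota 0 G) <= size cut_points ^ 2 * 7.
Proof.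
rewrite (eq_count (a2 := fun g => has (fun pq => ~~ ((distn pq.1 pq.2 < 3 ^ g) ||
    (3 ^ (g + 6) < distn pq.1 pq.2))) (allpairs pair cut_points cut_points))); last first.
  by move=> g; rewrite /= -has_predC.
apply: leq_trans (count_has_le _ _ _) _.
rewrite expnS expn1 -(size_allpairs pair); apply: sumn_map_le => pq.
apply: count_iota_spread_le => g1 g2; rewrite !negb_or -!leqNgt.
move=> /andP [h1 h2] /andP [h3 h4] _.
by rewrite -(leq_exp2l _ _ (isT : 1 < 3)); apply: leq_trans h3 h2.
Qed.

Hypothesis bal_in : N %/ 3 <= count f (iota 0 N).
Hypothesis bal_out : N %/ 3 <= count (predC f) (iota 0 N).

Lemma far_sign_change s : size cut_points * (2 * s) < N %/ 3 ->
  exists x d, [/\ x + d < N, ~~ near s x, ~~ near s (x + d), f x != f (x + d) &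
                  forall z, x < z < x + d -> near s z].
Proof.
move=> hsz.
pose Q d := has (fun x => [&& x + d < N, ~~ near s x, ~~ near s (x + d) & f x != f (x + d)])
  (iota 0 N).
have mkQ x y : x < y < N -> ~~ near s x -> ~~ near s y -> f x != f y -> Q (y - x).
  move=> xy fx fy fxy; apply/hasP; exists x; first by rewrite mem_iota; lia.
  by rewrite subnKC ?fx ?fy ?fxy; lia.
have [z1 [z1N fz1 sz1]] := exists_far hsz bal_in.
have [z0 [z0N fz0 sz0]] := exists_far hsz bal_out.
have exQ : exists d, Q d.
  have [z10|z01|e] := ltngtP z1 z0.
  - by exists (z0 - z1); apply: mkQ; rewrite ?sz1 ?(negbTE sz0) //; lia.
  - by exists (z1 - z0); apply: mkQ; rewrite ?sz1 ?(negbTE sz0) //; lia.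
  - by move: sz0; rewrite /= -e sz1.
have [d Qd min_d] := ex_minnP exQ.
case/hasP: Qd => x _ /and4P [xdN fx fxd sxd]; exists x, d; split => // z /andP [xz zxd].
apply: contraT => fz; have [e|ne] := eqVneq (f z) (f x).
- have zQ := mkQ z (x + d) ltac:(by rewrite zxd xdN) fz fxd ltac:(by rewrite e).
  by have := min_d _ zQ; clear -xz zxd; lia.
- have zN := ltn_trans zxd xdN.
  have zQ := mkQ x z ltac:(by rewrite xz zN) fx fz ltac:(by rewrite eq_sym).
  by have := min_d _ zQ; clear -xz zxd; lia.
Qed.

Lemma sign_change_config g : good_scale g -> size cut_points * (2 * 3 ^ g) < N %/ 3 ->
  exists x d, [/\ 0 < d < 3 * 3 ^ g + 2, margin g <= x /\ x + d + margin g < N,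
    f x != f (x + d), forall z, x - margin g <= z <= x -> f z = f x &
    forall z, x + d <= z <= x + d + margin g -> f z = f (x + d)].
Proof.
move=> gd hsz.
have s0 := expn3_gt0 g.
have [x [d [xdN fx fxd sxd nz]]] := far_sign_change hsz.
have d1 : 1 < d.
  case: d xdN fxd sxd nz => [|[|d]] // xdN fxd sxd _; first by rewrite addn0 eqxx in sxd.
  have hb : x + 1 \in boundaries S N.
    by rewrite mem_boundaries addn1 /= -[x.+1]addn1 sxd andbT.
  by move/hasPn: fxd => /(_ _ (boundary_cut_point hb)); rewrite /distn subnn s0.
have [c0 hc0 nc0] : exists2 c, c \in cut_points & distn c x.+1 < 3 ^ g.
  by apply/hasP; apply: nz; lia.
have [c1 hc1 /andP [nc1 dc1]] := near_cluster gd hc0 nc0 nz (z := (x + d).-1) ltac:(lia).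
have xl p := left_gap (p := p) gd fx hc0 nc0.
have yr p := right_gap (p := p) gd fxd hc1 nc1 ltac:(lia).
have h0 : 0 \in cut_points by rewrite inE eqxx.
have hN : N \in cut_points by rewrite !inE eqxx orbT.
have x_margin := xl 0 h0 (leq0n x); have xd_margin := yr N hN (ltnW xdN).
exists x, d; split => //.
- by move: d1 nc0 nc1 dc1; rewrite /distn; clear; lia.
- by move: x_margin xd_margin; clear; lia.
- move=> z /andP [zx xz]; rewrite -{1}(subnKC xz) blue_side_const //.
    by move: xz xdN; clear; lia.
  by move=> b bz; apply/negP => /boundary_cut_point /xl; move: zx bz; clear; lia.
- move=> z /andP [xdz zxd]; rewrite -(subnKC xdz) blue_side_const //.
    by move: zxd xd_margin; clear; lia.
  by move=> b bz; apply/negP => /boundary_cut_point /yr; move: bz zxd; clear; lia.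
Qed.

End Scales.

Section Crossings.
Variables (k : nat) (S : pred nat).

Local Notation f := (blue_side S).

Definition crossing (lam a : nat) (side right : bool) : Prop :=
  [/\ a %% 3 = 2, (right_partner lam a).*2 < 3 ^ k,
      f (a * 3 ^ lam) = side & f (partner right lam a) = ~~ side].

(** Two crossings at different levels in the same class are separated by one
    of the two partners: otherwise each vertex would be adjacent to the
    other's partner, and [Gk_blue_adj_between] would make the two partners
    equal. *)
Lemma crossings_separated lam lam' a a' side right :
  crossing lam a side right -> crossing lam' a' side right -> lam < lam' ->
  separated (3 ^ k) (Gk_adjn k) S side (2 * (a * 3 ^ lam)) (2 * (a' * 3 ^ lam')).
Proof.
move=> [a2 rk fx fp] [a2' rk' fx' fp'] ll.
have adjp lam0 a0 : a0 %% 3 = 2 -> (right_partner lam0 a0).*2 < 3 ^ k ->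
    Gk_adjn k (2 * (a0 * 3 ^ lam0)) (2 * partner right lam0 a0).
  by move=> *; rewrite Gk_adjn_double Gk_blue_adj_partner.
have pk lam0 a0 : (right_partner lam0 a0).*2 < 3 ^ k -> 2 * partner right lam0 a0 < 3 ^ k.
  by move=> h; have := partner_le right lam0 a0; lia.
have [e1|e1] := boolP (Gk_adjn k (2 * (a' * 3 ^ lam')) (2 * partner right lam a));
  last by exists (2 * partner right lam a); rewrite pk // adjp // (negbTE e1).
have [e2|e2] := boolP (Gk_adjn k (2 * (a * 3 ^ lam)) (2 * partner right lam' a'));
  last by exists (2 * partner right lam' a'); rewrite pk // adjp // (negbTE e2).
move: e1 e2; rewrite !Gk_adjn_double.
move=> /(Gk_blue_adj_between a2') b1 /(Gk_blue_adj_between a2) b2.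
have /eqP[] := partner_neq right a2 a2' ll.
by case: right {fp fp' adjp pk} b1 b2 => /= b1 b2; lia.
Qed.

Definition crossing_at (g : nat) (w : nat * nat * bool * bool) : Prop :=
  let: (lam, a, side, rt) := w in
  (lam = g + 3 \/ lam = g + 4) /\ crossing lam a side rt.

Definition crossing_vertex (w : nat * nat * bool * bool) : nat :=
  let: (lam, a, _, _) := w in 2 * (a * 3 ^ lam).

(** Distinct even scales give crossings at distinct levels. *)
Lemma crossing_at_separated g g' lam lam' a a' side right :
  ~~ odd g -> ~~ odd g' -> g != g' ->
  crossing_at g (lam, a, side, right) -> crossing_at g' (lam', a', side, right) ->
  separated (3 ^ k) (Gk_adjn k) S side (2 * (a * 3 ^ lam)) (2 * (a' * 3 ^ lam')).
Proof.
move=> og og' gg' [hl c] [hl' c'].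
have := odd_double_half g; have := odd_double_half g'.
rewrite (negbTE og) (negbTE og') => e' e.
have [ll|ll|ll] := ltngtP lam lam'.
- exact: crossings_separated c c' ll.
- exact/separatedC/(crossings_separated c' c ll).
- by move: gg'; rewrite -e -e'; lia.
Qed.

End Crossings.

Section ScaleCount.
Variables (k r : nat) (S : pred nat) (col : nat -> nat) (N : nat).
Hypothesis col_lt : forall u, u < 3 ^ k -> S u -> col u < r.
Hypothesis twins : forall u v w, u < 3 ^ k -> v < 3 ^ k -> w < 3 ^ k -> S u -> S v ->
  col u = col v -> ~~ S w -> Gk_adjn k u w = Gk_adjn k v w.
Hypothesis HN : (3 ^ k).+1 = N.*2.
Hypothesis bal_in : N %/ 3 <= count (blue_side S) (iota 0 N).
Hypothesis bal_out : N %/ 3 <= count (predC (blue_side S)) (iota 0 N).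

Local Notation f := (blue_side S).
Local Notation cut_points := (cut_points S N).
Local Notation good_scale := (good_scale S N).
Local Notation crossing := (crossing k S).
Local Notation crossing_at := (crossing_at k S).

Lemma crossing_at_scale g : good_scale g -> size cut_points * (2 * 3 ^ g) < N %/ 3 ->
  exists lam a side right, (lam = g + 3 \/ lam = g + 4) /\ crossing lam a side right.
Proof.
move=> gd hsz.
have [x [d [/andP [d0 d1] [xl xr] sxd fl fr]]] := sign_change_config bal_in bal_out gd hsz.
have s0 := expn3_gt0 g.
have HE : 3 ^ (g + 6) = 729 * 3 ^ g by rewrite expnD mulnC.
have HE3 : 3 ^ (g + 3) = 27 * 3 ^ g by rewrite expnD mulnC.
have [||lam [a [pL [hl [a2 hpL /andP [pLx xpL] /andP [rx rxd]]]]]] :=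
  brackets_near (h := g + 3) (leq_addr d x).
- by have := repunit_double (g + 3); lia.
- by lia.
have fpL : f pL = f x by apply: fl; lia.
have frp : f (right_partner lam a) = f (x + d) by apply: fr; lia.
have rpk : (right_partner lam a).*2 < 3 ^ k by lia.
have hl' : lam = g + 3 \/ lam = g + 4 by lia.
have neq_negb (b1 b2 : bool) : b1 != b2 -> b2 = ~~ b1 by case: b1; case: b2.
case: hpL => epL.
- exists lam, a, (f (a * 3 ^ lam)), true; split => //; split => //=.
  by rewrite -epL fpL frp; apply: neq_negb.
- have [e|e] := eqVneq (f (a * 3 ^ lam)) (f (right_partner lam a)).
  + exists lam, a, (f (a * 3 ^ lam)), false; split => //; split => //=.
    by rewrite -epL fpL e frp; apply: neq_negb; rewrite eq_sym.
  + exists lam, a, (f (a * 3 ^ lam)), true; split => //; split => //=.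
    exact: neq_negb.
Qed.

Lemma even_good_scales_size hs : uniq hs ->
  (forall g, g \in hs ->
     [/\ ~~ odd g, good_scale g & size cut_points * (2 * 3 ^ g) < N %/ 3]) ->
  size hs <= 4 * 2 ^ r.
Proof.
move=> uhs hhs.
have [|ws [ews hws]] := exists_witness_seq (W := crossing_at) (s := hs).
  move=> g /hhs [_ gd hsz].
  have [lam [a [side [right w]]]] := crossing_at_scale gd hsz.
  by exists (lam, a, side, right).
have fst_inj : {in ws &, injective fst} by apply: uniq_map_inj_in; rewrite ews.
rewrite -ews size_map.
apply: (size_le_4classes (c := fun p => (p.2.1.2, p.2.2))) => -[side right].
rewrite -size_filter -(size_map (crossing_vertex \o snd)).
set C := filter _ ws.
have memC p : p \in C -> exists g lam a,
    [/\ p = (g, (lam, a, side, right)), p \in ws & ~~ odd g].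
  rewrite mem_filter => /andP [/eqP + hp].
  case: p hp => g [[[lam a] side'] right'] hp /= [e1 e2]; subst side' right'.
  have hg : g \in hs by rewrite -ews (map_f fst hp).
  by have [og _ _] := hhs g hg; exists g, lam, a.
have sepC p q : p \in C -> q \in C -> p != q ->
    separated (3 ^ k) (Gk_adjn k) S side (crossing_vertex p.2) (crossing_vertex q.2).
  move=> /memC [g [lam [a [-> hp og]]]] /memC [g' [lam' [a' [-> hq og']]]] pq.
  apply: crossing_at_separated og og' _ (hws _ hp) (hws _ hq).
  by apply: contraNneq pq => gg; apply/eqP/fst_inj; rewrite //= gg.
apply: (separated_size (Gk_adjnC k) col_lt twins (side := side)).
- rewrite map_inj_in_uniq ?filter_uniq ?(map_uniq (f := fst)) ?ews // => p q hp hq /= e.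
  by apply/eqP/negPn/negP => /(sepC p q hp hq) [w [_ _]]; rewrite e eqxx.
- apply/allP => _ /mapP [p /memC [g [lam [a [-> hp _]]]] ->].
  have [_ [_ rk fx _]] := hws _ hp.
  have := partner_le true lam a; rewrite /= /blue_side in fx *; rewrite fx eqxx andbT.
  by rewrite /right_partner in rk *; lia.
- move=> _ _ /mapP [p hp ->] /mapP [q hq ->] ne.
  by apply: sepC => //; apply: contraNneq ne => ->.
Qed.

Lemma scales_bound m : (forall g, g < 2 * m -> size cut_points * (2 * 3 ^ g) < N %/ 3) ->
  m <= 4 * 2 ^ r + size cut_points ^ 2 * 7.
Proof.
move=> room.
set hs := [seq g <- iota 0 (2 * m) | ~~ odd g && good_scale g].
have hs_size : size hs <= 4 * 2 ^ r.
  apply: even_good_scales_size; first by rewrite filter_uniq // iota_uniq.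
  move=> g; rewrite mem_filter mem_iota => /andP [/andP [og gd] /andP [_ gm]].
  by split => //; apply: room.
have good_even : count (predD (fun g => ~~ odd g) (predC good_scale)) (iota 0 (2 * m))
    = size hs.
  by rewrite size_filter; apply: eq_count => g; rewrite /= negbK andbC.
have := count_le_predD (fun g => ~~ odd g) (predC good_scale) (iota 0 (2 * m)).
rewrite count_even_iota good_even; have := count_bad_scales S N (2 * m); lia.
Qed.

End ScaleCount.

Lemma balanced_cut k r N : 1 < k -> (3 ^ k).+1 = N.*2 -> cw_le (@Gk_adj k) r ->
  exists (S : pred nat) (col : nat -> nat),
  [/\ forall u, u < 3 ^ k -> S u -> col u < r,
      forall u v w, u < 3 ^ k -> v < 3 ^ k -> w < 3 ^ k -> S u -> S v ->
        col u = col v -> ~~ S w -> Gk_adjn k u w = Gk_adjn k v w,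
      N %/ 3 <= count (blue_side S) (iota 0 N) &
      N %/ 3 <= count (predC (blue_side S)) (iota 0 N)].
Proof.
move=> k1 HN [e [wf pe ed]].
have ue : uniq (cw_leaves e) by rewrite (perm_uniq pe) enum_uniq.
set blues := [seq 2 * b | b <- iota 0 N].
have ublues : uniq blues by rewrite map_inj_uniq ?iota_uniq // => x y; lia.
have weight_e : weight val blues e = N.
  rewrite /weight -(size_iota 0 N) -(size_map (muln 2)); apply/eqP.
  rewrite -all_count; apply/allP => x /mapP [b].
  rewrite mem_iota => /andP [_ bN] ->; have b2 : 2 * b < 3 ^ k by lia.
  by apply/mapP; exists (Ordinal b2); rewrite ?(perm_mem pe) ?mem_enum.
have N3 : 0 < N %/ 3.
  have : 3 ^ 2 <= 3 ^ k by rewrite leq_exp2l.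
  lia.
have [e' se' /andP [lo hi]] :=
  balanced_subexp val_inj ublues ue N3 (leq_trans (leq_div N 3) (eq_leq (esym weight_e))).
pose S t := t \in map val (cw_leaves e').
have weight_e' : weight val blues e' = count (blue_side S) (iota 0 N).
  by rewrite /weight count_map.
exists S, (fun t => if insub t : option 'I_(3 ^ k) is Some o then cw_color e' o else 0).
split.
- move=> u uk _; rewrite insubT /=.
  exact: cw_color_lt (cw_wf_subexp se' wf).
- move=> u v w uk vk wk.
  rewrite -[u]/(val (Ordinal uk)) -[v]/(val (Ordinal vk)) -[w]/(val (Ordinal wk)).
  rewrite /S !(mem_map val_inj) !valK => su sv cuv sw.
  by have [_ tw] := cw_twins se' ue su sv cuv; have := tw _ sw; rewrite !ed.
- by rewrite -weight_e'.
- have := count_predC (blue_side S) (iota 0 N); have := leq_divM N 3.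
  by rewrite size_iota -weight_e'; lia.
Qed.

Lemma room_at_scale k N p g : (3 ^ k).+1 = N.*2 -> g + p + 11 <= k ->
  p * (2 * 3 ^ g) < N %/ 3.
Proof.
move=> HN gk.
have pp : p < 3 ^ p by apply: ltn_expl.
have : 3 ^ (g + p + 11) <= 3 ^ k by rewrite leq_exp2l.
rewrite !expnD; have := expn3_gt0 g; have := leq_divM N 3.
move: (3 ^ g) (3 ^ p) pp => X P pp X0 NN; nia.
Qed.

Theorem theorem17 :
  forall r : nat, exists k : nat, 0 < k /\ ~ cw_le (@Gk_adj k) r.
Proof.
move=> r.
pose p := 4 * 2 ^ r + 2; pose m := 4 * 2 ^ r + p ^ 2 * 7 + 1.
exists (2 * m + p + 11); split => [|cw]; first lia.
set k := 2 * m + p + 11 in cw.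
have [N HN] : exists N, (3 ^ k).+1 = N.*2.
  exists (3 ^ k)./2.+1; have := odd_double_half (3 ^ k).
  by rewrite oddX orbT; lia.
have [|S [col [col_lt twins bal_in bal_out]]] := balanced_cut _ HN cw; first lia.
have cuts : size (cut_points S N) <= p.
  by have := size_boundaries col_lt twins HN; rewrite /=; lia.
have room g : g < 2 * m -> size (cut_points S N) * (2 * 3 ^ g) < N %/ 3.
  move=> gm; have gk : g + p + 11 <= k by rewrite /k; lia.
  by apply: leq_ltn_trans (room_at_scale HN gk); rewrite leq_mul2r cuts orbT.
have := scales_bound col_lt twins HN bal_in bal_out room.
have : size (cut_points S N) ^ 2 <= p ^ 2 by rewrite leq_exp2r.
by rewrite /m; lia.
Qed.
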